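(* Let $X$ be a matrix ordered operator space and let $J\subseteq X$ be a kernel. Then $X/J$, with the quotient operator space structure, involution $(x+J)^*=x^*+J$ and cones $M_n(X/J)^+=\overline{\{x+M_n(J):x\in M_n(X)^+\}}$, is a matrix ordered operator space.
   Context: A matrix ordered operator space is an operator space $X$ with a conjugate-linear completely isometric involution and, for each $n$, a norm-closed cone $M_n(X)^+\subseteq M_n(X)^{sa}$ such that the family is closed under $x\mapsto\alpha^*x\alpha$ for scalar matrices $\alpha$ and under direct sums (a matrix convex cone), and $M_n(X)^+\cap(-M_n(X)^+)=\{0\}$ for all $n$. A closed subspace $J\subseteq X$ is a kernel if $J=\ker\phi$ for some completely contractive completely positive map $\phi:X\to Y$ into a matrix ordered operator space $Y$. The quotient operator space structure identifies $M_n(X/J)$ isometrically with $M_n(X)/M_n(J)$, and the closure in the claim is in this quotient norm. *)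

From mathcomp Require Import all_boot all_order all_algebra.
From mathcomp Require Import complex.
From mathcomp Require Import all_classical all_reals.

Set Implicit Arguments.
Unset Strict Implicit.
Unset Printing Implicit Defensive.

Import Order.TTheory GRing.Theory Num.Theory.
Local Open Scope ring_scope.
Local Open Scope classical_set_scope.

Section MOOS.
Variable R : realType.
Local Notation C := (R[i]).

Definition cabs (z : C) : R := Num.sqrt (complex.Re z ^+ 2 + complex.Im z ^+ 2).
Definition vnorm2 n (v : 'cV[C]_n) : R :=
  \sum_(i < n) (complex.Re (v i 0) ^+ 2 + complex.Im (v i 0) ^+ 2).

Definition opbound m n (a : 'M[C]_(m, n)) (c : R) : Prop :=
  0 <= c /\ forall v : 'cV[C]_n, vnorm2 (a *m v) <= c ^+ 2 * vnorm2 v.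

Definition adjmx m n (a : 'M[C]_(m, n)) : 'M[C]_(n, m) := map_mx conjc a^T.

Section Space.
Variable X : lmodType C.

Definition lsmul m n p (a : 'M[C]_(m, n)) (x : 'M[X]_(n, p)) : 'M[X]_(m, p) :=
  \matrix_(i, j) \sum_(k < n) a i k *: x k j.
Definition rsmul m n p (x : 'M[X]_(m, n)) (b : 'M[C]_(n, p)) : 'M[X]_(m, p) :=
  \matrix_(i, j) \sum_(k < n) b k j *: x i k.

Definition mxstar (star : X -> X) n (x : 'M[X]_n) : 'M[X]_n :=
  \matrix_(i, j) star (x j i).

Definition dsum n m (x : 'M[X]_n) (y : 'M[X]_m) : 'M[X]_(n + m) :=
  block_mx x 0 0 y.

Definition mxin (J : set X) n : set 'M[X]_n := [set x | forall i j, J (x i j)].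

Definition nclosure n (N : 'M[X]_n -> R) (S : set 'M[X]_n) : set 'M[X]_n :=
  [set x | forall e : R, 0 < e -> exists2 y, S y & N (x - y) < e].

Definition is_operator_space (N : forall n, 'M[X]_n -> R) : Prop :=
  [/\ (forall n (x y : 'M[X]_n), N n (x + y) <= N n x + N n y),
      (forall n (l : C) (x : 'M[X]_n), N n (map_mx ( *:%R l) x) = cabs l * N n x),
      (forall n (x : 'M[X]_n), N n x = 0 -> x = 0),
      (forall n m (x : 'M[X]_n) (y : 'M[X]_m),
          N (n + m)%N (dsum x y) = Num.max (N n x) (N m y)) &
      (forall n (a b : 'M[C]_n) (x : 'M[X]_n) (ca cb : R),
          opbound a ca -> opbound b cb ->
          N n (rsmul (lsmul a x) b) <= ca * N n x * cb)].

Definition is_cci_involution (N : forall n, 'M[X]_n -> R) (star : X -> X) : Prop :=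
  [/\ (forall x, star (star x) = x),
      (forall x y, star (x + y) = star x + star y),
      (forall (l : C) x, star (l *: x) = conjc l *: star x) &
      (forall n (x : 'M[X]_n), N n (mxstar star x) = N n x)].

Definition is_matrix_ordering (N : forall n, 'M[X]_n -> R) (star : X -> X)
    (P : forall n, set 'M[X]_n) : Prop :=
  [/\ (forall n (x : 'M[X]_n), P n x -> mxstar star x = x),
      (forall n, nclosure (N n) (P n) `<=` P n),
      (forall n m (a : 'M[C]_(n, m)) (x : 'M[X]_n),
          P n x -> P m (rsmul (lsmul (adjmx a) x) a)),
      (forall n m (x : 'M[X]_n) (y : 'M[X]_m), P n x -> P m y -> P (n + m)%N (dsum x y)) &
      (forall n (x : 'M[X]_n), P n x -> P n (- x) -> x = 0)].

Definition is_moos (N : forall n, 'M[X]_n -> R) (star : X -> X)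
    (P : forall n, set 'M[X]_n) : Prop :=
  [/\ is_operator_space N, is_cci_involution N star & is_matrix_ordering N star P].

End Space.

(* J is a kernel of the matrix ordered operator space (X, N, star, P):
   J = ker phi for a completely contractive, completely positive
   (self-adjoint, i.e. *-preserving) linear map phi into a matrix ordered
   operator space Y. *)
Definition is_kernel (X : lmodType C) (N : forall n, 'M[X]_n -> R) (star : X -> X)
    (P : forall n, set 'M[X]_n) (J : set X) : Prop :=
  exists (Y : lmodType C) (NY : forall n, 'M[Y]_n -> R) (starY : Y -> Y)
         (PY : forall n, set 'M[Y]_n) (phi : {linear X -> Y}),
    [/\ is_moos NY starY PY,
        (forall x, phi (star x) = starY (phi x)),
        (forall n (x : 'M[X]_n), NY n (map_mx phi x) <= N n x),
        (forall n (x : 'M[X]_n), P n x -> PY n (map_mx phi x)) &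
        J = [set x | phi x = 0]].


End MOOS.
Arguments mxin {R X} J n.

(* The quotient X/J is realised as the image phi(X) of the map phi whose
   kernel is J, normed by the quotient norms inf_{j in M_n(J)} N(x + j).
   Ruan's axioms and the isometric involution pass to these seminorms because
   M_n(J) is a *-invariant subspace stable under direct sums, compressions and
   corners, and they are definite because phi is completely contractive:
   N_Y(phi_n(x)) <= N(x + j) for all j in M_n(J).  The quotient cones are
   closures, so self-adjointness, closedness, direct sums and compressions
   carry over by continuity.  Finally, if both y = q_n(x) and -y lie in the
   quotient cone (q being the corestriction of phi to its image), then
   +-phi_n(x) lie in the closed cone of Y because phi_n is contractive, so
   phi_n(x) = 0 and y = 0. *)

From HB Require Import structures.
From mathcomp Require Import all_boot all_order all_algebra.
From mathcomp Require Import complex.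
From mathcomp Require Import all_classical all_reals.
From mathcomp Require Import lra.

Set Implicit Arguments.
Unset Strict Implicit.
Unset Printing Implicit Defensive.
Import Order.TTheory GRing.Theory Num.Theory.
Local Open Scope ring_scope.
Local Open Scope classical_set_scope.

Section ScalarAction.
Variables (R : realType) (V : lmodType R[i]).
Local Notation C := R[i].

Lemma lsmulDl m n p (a b : 'M[C]_(m, n)) (x : 'M[V]_(n, p)) :
  lsmul (a + b) x = lsmul a x + lsmul b x.
Proof.
apply/matrixP=> i j; rewrite !mxE -big_split.
by apply: eq_bigr => k _; rewrite !mxE scalerDl.
Qed.

Lemma lsmul0l m n p (x : 'M[V]_(n, p)) : lsmul (0 : 'M[C]_(m, n)) x = 0.
Proof. by apply/matrixP=> i j; rewrite !mxE big1 // => k _; rewrite mxE scale0r.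
Qed.

Lemma lsmulZl m n p c (a : 'M[C]_(m, n)) (x : 'M[V]_(n, p)) :
  lsmul (c *: a) x = map_mx ( *:%R c) (lsmul a x).
Proof.
apply/matrixP=> i j; rewrite !mxE scaler_sumr.
by apply: eq_bigr => k _; rewrite !mxE scalerA.
Qed.

Lemma lsmulDr m n p (a : 'M[C]_(m, n)) (x y : 'M[V]_(n, p)) :
  lsmul a (x + y) = lsmul a x + lsmul a y.
Proof.
apply/matrixP=> i j; rewrite !mxE -big_split.
by apply: eq_bigr => k _; rewrite !mxE scalerDr.
Qed.

Lemma lsmul0r m n p (a : 'M[C]_(m, n)) : lsmul a (0 : 'M[V]_(n, p)) = 0.
Proof. by apply/matrixP=> i j; rewrite !mxE big1 // => k _; rewrite mxE scaler0.
Qed.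

Lemma lsmulNr m n p (a : 'M[C]_(m, n)) (x : 'M[V]_(n, p)) :
  lsmul a (- x) = - lsmul a x.
Proof.
apply/matrixP=> i j; rewrite !mxE -sumrN.
by apply: eq_bigr => k _; rewrite !mxE scalerN.
Qed.

Lemma lsmul1 n p (x : 'M[V]_(n, p)) : lsmul 1%:M x = x.
Proof.
apply/matrixP=> i j; rewrite !mxE (bigD1 i) //= big1 ?addr0.
  by rewrite !mxE eqxx scale1r.
by move=> k /negbTE ki; rewrite !mxE eq_sym ki scale0r.
Qed.

Lemma lsmul_suml m n p I (r : seq I) (P : pred I) (F : I -> 'M[C]_(m, n))
    (x : 'M[V]_(n, p)) :
  lsmul (\sum_(i <- r | P i) F i) x = \sum_(i <- r | P i) lsmul (F i) x.
Proof.
exact: (big_morph (fun a => lsmul a x) (fun a b => lsmulDl a b x) (lsmul0l m x)).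
Qed.

Lemma rsmulDl m n p (x y : 'M[V]_(m, n)) (b : 'M[C]_(n, p)) :
  rsmul (x + y) b = rsmul x b + rsmul y b.
Proof.
apply/matrixP=> i j; rewrite !mxE -big_split.
by apply: eq_bigr => k _; rewrite !mxE scalerDr.
Qed.

Lemma rsmul0l m n p (b : 'M[C]_(n, p)) : rsmul (0 : 'M[V]_(m, n)) b = 0.
Proof. by apply/matrixP=> i j; rewrite !mxE big1 // => k _; rewrite mxE scaler0.
Qed.

Lemma rsmulNl m n p (x : 'M[V]_(m, n)) (b : 'M[C]_(n, p)) :
  rsmul (- x) b = - rsmul x b.
Proof.
apply/matrixP=> i j; rewrite !mxE -sumrN.
by apply: eq_bigr => k _; rewrite !mxE scalerN.
Qed.

Lemma rsmulZl m n p c (x : 'M[V]_(m, n)) (b : 'M[C]_(n, p)) :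
  rsmul (map_mx ( *:%R c) x) b = map_mx ( *:%R c) (rsmul x b).
Proof.
apply/matrixP=> i j; rewrite !mxE scaler_sumr.
by apply: eq_bigr => k _; rewrite !mxE !scalerA mulrC.
Qed.

Lemma rsmulDr m n p (x : 'M[V]_(m, n)) (a b : 'M[C]_(n, p)) :
  rsmul x (a + b) = rsmul x a + rsmul x b.
Proof.
apply/matrixP=> i j; rewrite !mxE -big_split.
by apply: eq_bigr => k _; rewrite !mxE scalerDl.
Qed.

Lemma rsmul0r m n p (x : 'M[V]_(m, n)) : rsmul x (0 : 'M[C]_(n, p)) = 0.
Proof. by apply/matrixP=> i j; rewrite !mxE big1 // => k _; rewrite mxE scale0r.
Qed.

Lemma rsmulZr m n p c (x : 'M[V]_(m, n)) (b : 'M[C]_(n, p)) :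
  rsmul x (c *: b) = map_mx ( *:%R c) (rsmul x b).
Proof.
apply/matrixP=> i j; rewrite !mxE scaler_sumr.
by apply: eq_bigr => k _; rewrite !mxE scalerA.
Qed.

Lemma rsmul1 m n (x : 'M[V]_(m, n)) : rsmul x 1%:M = x.
Proof.
apply/matrixP=> i j; rewrite !mxE (bigD1 j) //= big1 ?addr0.
  by rewrite !mxE eqxx scale1r.
by move=> k /negbTE kj; rewrite !mxE kj scale0r.
Qed.

Lemma rsmul_suml m n p I (r : seq I) (P : pred I) (F : I -> 'M[V]_(m, n))
    (b : 'M[C]_(n, p)) :
  rsmul (\sum_(i <- r | P i) F i) b = \sum_(i <- r | P i) rsmul (F i) b.
Proof.
exact: (big_morph (fun x => rsmul x b) (fun x y => rsmulDl x y b) (rsmul0l m b)).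
Qed.

Lemma rsmul_sumr m n p I (r : seq I) (P : pred I) (F : I -> 'M[C]_(n, p))
    (x : 'M[V]_(m, n)) :
  rsmul x (\sum_(i <- r | P i) F i) = \sum_(i <- r | P i) rsmul x (F i).
Proof. exact: (big_morph (rsmul x) (rsmulDr x) (rsmul0r p x)). Qed.

Lemma compressB m n p q (a : 'M[C]_(m, n)) (b : 'M[C]_(p, q))
    (x y : 'M[V]_(n, p)) :
  rsmul (lsmul a (x - y)) b = rsmul (lsmul a x) b - rsmul (lsmul a y) b.
Proof. by rewrite lsmulDr lsmulNr rsmulDl rsmulNl. Qed.

Lemma lsmul_block m1 m2 n1 n2 p1 p2
  (a11 : 'M[C]_(m1, n1)) (a12 : 'M[C]_(m1, n2))
  (a21 : 'M[C]_(m2, n1)) (a22 : 'M[C]_(m2, n2))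
  (x11 : 'M[V]_(n1, p1)) (x12 : 'M[V]_(n1, p2))
  (x21 : 'M[V]_(n2, p1)) (x22 : 'M[V]_(n2, p2)) :
  lsmul (block_mx a11 a12 a21 a22) (block_mx x11 x12 x21 x22) =
  block_mx (lsmul a11 x11 + lsmul a12 x21) (lsmul a11 x12 + lsmul a12 x22)
           (lsmul a21 x11 + lsmul a22 x21) (lsmul a21 x12 + lsmul a22 x22).
Proof.
apply/matrixP=> i j; rewrite -(@splitK _ _ i) -(@splitK _ _ j).
case: (fintype.split i) => k; case: (fintype.split j) => l;
rewrite /= ?block_mxEul ?block_mxEur ?block_mxEdl ?block_mxEdr;
rewrite !mxE big_split_ord /=;
by congr (_ + _); apply: eq_bigr => r _;
  rewrite ?block_mxEul ?block_mxEur ?block_mxEdl ?block_mxEdr.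
Qed.

Lemma rsmul_block m1 m2 n1 n2 p1 p2
  (x11 : 'M[V]_(m1, n1)) (x12 : 'M[V]_(m1, n2))
  (x21 : 'M[V]_(m2, n1)) (x22 : 'M[V]_(m2, n2))
  (b11 : 'M[C]_(n1, p1)) (b12 : 'M[C]_(n1, p2))
  (b21 : 'M[C]_(n2, p1)) (b22 : 'M[C]_(n2, p2)) :
  rsmul (block_mx x11 x12 x21 x22) (block_mx b11 b12 b21 b22) =
  block_mx (rsmul x11 b11 + rsmul x12 b21) (rsmul x11 b12 + rsmul x12 b22)
           (rsmul x21 b11 + rsmul x22 b21) (rsmul x21 b12 + rsmul x22 b22).
Proof.
apply/matrixP=> i j; rewrite -(@splitK _ _ i) -(@splitK _ _ j).
case: (fintype.split i) => k; case: (fintype.split j) => l;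
rewrite /= ?block_mxEul ?block_mxEur ?block_mxEdl ?block_mxEdr;
rewrite !mxE big_split_ord /=;
by congr (_ + _); apply: eq_bigr => r _;
  rewrite ?block_mxEul ?block_mxEur ?block_mxEdl ?block_mxEdr.
Qed.

Lemma map_lsmul (W : lmodType C) (f : {linear V -> W}) m n p
    (a : 'M[C]_(m, n)) (x : 'M[V]_(n, p)) :
  map_mx f (lsmul a x) = lsmul a (map_mx f x).
Proof.
apply/matrixP=> i j; rewrite !mxE linear_sum.
by apply: eq_bigr => k _; rewrite linearZ !mxE.
Qed.

Lemma map_rsmul (W : lmodType C) (f : {linear V -> W}) m n p
    (x : 'M[V]_(m, n)) (b : 'M[C]_(n, p)) :
  map_mx f (rsmul x b) = rsmul (map_mx f x) b.
Proof.
apply/matrixP=> i j; rewrite !mxE linear_sum.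
by apply: eq_bigr => k _; rewrite linearZ !mxE.
Qed.

Lemma map_scale (W : lmodType C) (f : {linear V -> W}) m n c (x : 'M[V]_(m, n)) :
  map_mx f (map_mx ( *:%R c) x) = map_mx ( *:%R c) (map_mx f x).
Proof. by apply/matrixP => i j; rewrite !mxE linearZ. Qed.

Lemma map_dsum (W : lmodType C) (f : {linear V -> W}) n m
    (x : 'M[V]_n) (y : 'M[V]_m) :
  map_mx f (dsum x y) = dsum (map_mx f x) (map_mx f y).
Proof. by rewrite /dsum map_block_mx !map_mx0. Qed.

End ScalarAction.

Section ComplexModulus.
Variable R : realType.

Lemma cabsE (z : R[i]) : cabs z = Normc.normc z.
Proof. by case: z. Qed.

Lemma cabs_ge0 (z : R[i]) : 0 <= cabs z.
Proof. exact: sqrtr_ge0. Qed.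

Lemma cabs0 : cabs (0 : R[i]) = 0.
Proof. by rewrite cabsE Normc.normc0. Qed.

Lemma cabsN1 : cabs (-1 : R[i]) = 1.
Proof. by rewrite /cabs /= oppr0 expr0n /= addr0 sqrrN expr1n sqrtr1. Qed.

Lemma cabsV (z : R[i]) : cabs z^-1 = (cabs z)^-1.
Proof. by rewrite !cabsE Normc.normcV. Qed.

Lemma cabs_gt0 (z : R[i]) : z != 0 -> 0 < cabs z.
Proof.
move=> z0; rewrite lt_neqAle cabs_ge0 andbT eq_sym; apply: contra z0.
by rewrite cabsE => /eqP /Normc.eq0_normc ->.
Qed.

End ComplexModulus.

Section ScalarMatrixBounds.
Variable R : realType.
Local Notation C := R[i].

Lemma opbound_delta n (i j : 'I_n) : opbound (delta_mx i j : 'M[C]_n) 1.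
Proof.
split => // v; rewrite expr1n mul1r /vnorm2.
rewrite (bigD1 i) //= big1 ?addr0; last first.
  move=> r /negbTE ri; rewrite !mxE big1 ?expr0n ?addr0 //= => k _.
  by rewrite !mxE ri mul0r.
have -> : (delta_mx i j *m v) i 0 = v j 0.
  rewrite !mxE (bigD1 j) //= big1 ?addr0; first by rewrite !mxE !eqxx mul1r.
  by move=> k /negbTE kj; rewrite !mxE eqxx kj mul0r.
rewrite [X in _ <= X](bigD1 j) //= lerDl.
by apply: sumr_ge0 => k _; rewrite addr_ge0 // sqr_ge0.
Qed.

Lemma opbound_ulproj n m : opbound (block_mx 1%:M 0 0 0 : 'M[C]_(n + m)) 1.
Proof.
split => // v; rewrite expr1n mul1r -(vsubmxK v) mul_block_col.
rewrite !mul1mx !mul0mx !addr0 /vnorm2 !big_split_ord /=.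
under eq_bigr => k _ do rewrite col_mxEu.
under [X in _ + X <= _]eq_bigr => k _ do rewrite col_mxEd mxE /=.
under [X in _ <= X + _]eq_bigr => k _ do rewrite col_mxEu.
rewrite [X in _ + X <= _]big1 ?addr0 ?lerDl; last first.
  by move=> k _; rewrite expr0n /= addr0.
by apply: sumr_ge0 => k _; rewrite addr_ge0 // sqr_ge0.
Qed.

Lemma opbound_drproj n m : opbound (block_mx 0 0 0 1%:M : 'M[C]_(n + m)) 1.
Proof.
split => // v; rewrite expr1n mul1r -(vsubmxK v) mul_block_col.
rewrite !mul1mx !mul0mx !add0r /vnorm2 !big_split_ord /=.
under eq_bigr => k _ do rewrite col_mxEu mxE /=.
under [X in _ + X <= _]eq_bigr => k _ do rewrite col_mxEd.
under [X in _ <= _ + X]eq_bigr => k _ do rewrite col_mxEd.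
rewrite [X in X + _ <= _]big1 ?add0r ?lerDr; last first.
  by move=> k _; rewrite expr0n /= addr0.
by apply: sumr_ge0 => k _; rewrite addr_ge0 // sqr_ge0.
Qed.

Definition mxl1norm m n (a : 'M[C]_(m, n)) : R :=
  \sum_(i < m) \sum_(j < n) cabs (a i j).

Lemma mxl1norm_ge0 m n (a : 'M[C]_(m, n)) : 0 <= mxl1norm a.
Proof. by do 2!apply: sumr_ge0 => ? _; exact: cabs_ge0. Qed.

End ScalarMatrixBounds.

Section NormClosure.
Variable R : realType.
Local Notation C := R[i].

Lemma nclosure_lipschitz (V W : lmodType C) n m (NV : 'M[V]_n -> R)
    (NW : 'M[W]_m -> R) (f : 'M[V]_n -> 'M[W]_m) (K : R)
    (S : set 'M[V]_n) (T : set 'M[W]_m) :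
  0 <= K -> (forall x y, NW (f x - f y) <= K * NV (x - y)) ->
  f @` S `<=` T -> f @` nclosure NV S `<=` nclosure NW T.
Proof.
move=> K0 f_lip fST _ [x clx <-] e e0.
have eK : 0 < e / (K + 1) by rewrite divr_gt0 //; lra.
have [y Sy xy_small] := clx _ eK.
exists (f y); first by apply: fST; exists y.
apply: le_lt_trans (f_lip x y) _.
have eKE : e / (K + 1) * (K + 1) = e by rewrite divfK // gt_eqF //; lra.
move: xy_small eK eKE; move: (e / (K + 1)) (NV (x - y)) => t u; nra.
Qed.

End NormClosure.

Section OperatorSpace.
Variables (R : realType) (V : lmodType R[i]).
Local Notation C := R[i].
Variable NV : forall n, 'M[V]_n -> R.
Hypothesis osV : is_operator_space NV.

Lemma os_normD n (x y : 'M[V]_n) : NV (x + y) <= NV x + NV y.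
Proof. by case: osV. Qed.

Lemma os_normZ n c (x : 'M[V]_n) : NV (map_mx ( *:%R c) x) = cabs c * NV x.
Proof. by case: osV. Qed.

Lemma os_norm_eq0 n (x : 'M[V]_n) : NV x = 0 -> x = 0.
Proof. by case: osV => _ _ H _ _; exact: H. Qed.

Lemma os_norm_dsum n m (x : 'M[V]_n) (y : 'M[V]_m) :
  NV (dsum x y) = Num.max (NV x) (NV y).
Proof. by case: osV. Qed.

Lemma os_norm_compress n (a b : 'M[C]_n) (x : 'M[V]_n) ca cb :
  opbound a ca -> opbound b cb -> NV (rsmul (lsmul a x) b) <= ca * NV x * cb.
Proof. by case: osV => _ _ _ _ H; exact: H. Qed.

Lemma os_norm0 n : NV (0 : 'M[V]_n) = 0.
Proof.
have -> : 0 = map_mx ( *:%R (0 : C)) (0 : 'M[V]_n) by rewrite map_mx0.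
by rewrite os_normZ cabs0 mul0r.
Qed.

Lemma os_normN n (x : 'M[V]_n) : NV (- x) = NV x.
Proof.
have -> : - x = map_mx ( *:%R (-1 : C)) x.
  by apply/matrixP => i j; rewrite !mxE scaleN1r.
by rewrite os_normZ cabsN1 mul1r.
Qed.

Lemma os_norm_ge0 n (x : 'M[V]_n) : 0 <= NV x.
Proof. by have := os_normD x (- x); rewrite subrr os_norm0 os_normN; lra. Qed.

Lemma os_norm_sum n I (r : seq I) (P : pred I) (F : I -> 'M[V]_n) :
  NV (\sum_(i <- r | P i) F i) <= \sum_(i <- r | P i) NV (F i).
Proof.
elim/big_rec2: _ => [|i y1 y2 _ h]; first by rewrite os_norm0.
by apply: le_trans (os_normD _ _) _; rewrite lerD2l.
Qed.

Lemma os_norm_dsum0r n m (x : 'M[V]_n) : NV (dsum x (0 : 'M[V]_m)) = NV x.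
Proof. by rewrite os_norm_dsum os_norm0 max_l // os_norm_ge0. Qed.

Lemma os_norm_dsum0l n m (x : 'M[V]_n) : NV (dsum (0 : 'M[V]_m) x) = NV x.
Proof. by rewrite os_norm_dsum os_norm0 max_r // os_norm_ge0. Qed.

(* Expand both scalar matrices along the matrix units and apply Ruan's axiom
   to each pair of units. *)
Lemma os_norm_compress_l1 n (a b : 'M[C]_n) (x : 'M[V]_n) :
  NV (rsmul (lsmul a x) b) <= mxl1norm a * NV x * mxl1norm b.
Proof.
rewrite {1}(matrix_sum_delta a) lsmul_suml rsmul_suml /mxl1norm -!mulrA mulr_suml.
apply: le_trans (os_norm_sum _ _ _) _; apply: ler_sum => i _.
rewrite lsmul_suml rsmul_suml mulr_suml.
apply: le_trans (os_norm_sum _ _ _) _; apply: ler_sum => j _.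
rewrite lsmulZl rsmulZl os_normZ ler_wpM2l ?cabs_ge0 //.
rewrite {1}(matrix_sum_delta b) rsmul_sumr !mulr_sumr.
apply: le_trans (os_norm_sum _ _ _) _; apply: ler_sum => k _.
rewrite rsmul_sumr mulr_sumr.
apply: le_trans (os_norm_sum _ _ _) _; apply: ler_sum => l _.
rewrite rsmulZr os_normZ mulrC ler_wpM2r ?cabs_ge0 //.
have := os_norm_compress x (opbound_delta R i j) (opbound_delta R k l).
by rewrite mul1r mulr1.
Qed.

Lemma os_norm_ulsubmx n m (w : 'M[V]_(n + m)) : NV (ulsubmx w) <= NV w.
Proof.
have := os_norm_compress w (opbound_ulproj R n m) (opbound_ulproj R n m).
rewrite mul1r mulr1 -{1}(submxK w) lsmul_block !lsmul1 !lsmul0l !addr0.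
rewrite rsmul_block !rsmul1 !rsmul0r ?rsmul0l !addr0.
by rewrite -/(dsum _ _) os_norm_dsum0r.
Qed.

Lemma os_norm_drsubmx n m (w : 'M[V]_(n + m)) : NV (drsubmx w) <= NV w.
Proof.
have := os_norm_compress w (opbound_drproj R n m) (opbound_drproj R n m).
rewrite mul1r mulr1 -{1}(submxK w) lsmul_block !lsmul1 !lsmul0l !add0r.
rewrite rsmul_block !rsmul1 !rsmul0r ?rsmul0l !add0r.
by rewrite -/(dsum _ _) os_norm_dsum0l.
Qed.

(* A rectangular compression is a corner of a square one:
   [0 0; b 0] (x (+) 0) [0 a; 0 0] = 0 (+) b x a. *)
Lemma os_norm_compress_rect n m (b : 'M[C]_(m, n)) (a : 'M[C]_(n, m)) :
  exists2 K, 0 <= K & forall x : 'M[V]_n, NV (rsmul (lsmul b x) a) <= K * NV x.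
Proof.
pose B : 'M[C]_(n + m) := block_mx 0 0 b 0.
pose A : 'M[C]_(n + m) := block_mx 0 a 0 0.
exists (mxl1norm B * mxl1norm A); first by rewrite mulr_ge0 ?mxl1norm_ge0.
move=> x; have := os_norm_compress_l1 B A (dsum x 0).
rewrite /A /B /dsum lsmul_block !lsmul0l !lsmul0r !addr0.
rewrite rsmul_block !rsmul0r ?rsmul0l !addr0 ?add0r.
by rewrite -/(dsum _ _) -/(dsum _ _) os_norm_dsum0l os_norm_dsum0r mulrAC.
Qed.

Lemma nclosure_idem n (S : set 'M[V]_n) :
  nclosure (@NV n) (nclosure (@NV n) S) `<=` nclosure (@NV n) S.
Proof.
move=> x clx e e0.
have e2 : 0 < e / 2 by rewrite divr_gt0.
have [y cly xy_small] := clx _ e2; have [z Sz yz_small] := cly _ e2.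
exists z => //; have -> : x - z = (x - y) + (y - z) by rewrite addrA subrK.
apply: le_lt_trans (os_normD _ _) _.
have : e / 2 + e / 2 = e by rewrite -splitr.
lra.
Qed.

Lemma nclosure_dsum n m (S : set 'M[V]_n) (T : set 'M[V]_m)
    (U : set 'M[V]_(n + m)) :
  (forall x y, S x -> T y -> U (dsum x y)) ->
  forall x y, nclosure (@NV n) S x -> nclosure (@NV m) T y ->
  nclosure (@NV (n + m)) U (dsum x y).
Proof.
move=> STU x y clx cly e e0.
have [x' Sx' xx'_small] := clx e e0; have [y' Ty' yy'_small] := cly e e0.
exists (dsum x' y'); first exact: STU.
have -> : dsum x y - dsum x' y' = dsum (x - x') (y - y').
  by rewrite /dsum opp_block_mx add_block_mx !oppr0 !addr0.
by rewrite os_norm_dsum gt_max xx'_small yy'_small.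
Qed.

End OperatorSpace.

Section Involution.
Variables (R : realType) (V : lmodType R[i]).
Variables (NV : forall n, 'M[V]_n -> R) (s : V -> V).
Hypothesis invV : is_cci_involution NV s.

Lemma starK x : s (s x) = x.
Proof. by case: invV. Qed.

Lemma starD x y : s (x + y) = s x + s y.
Proof. by case: invV. Qed.

Lemma starZ c x : s (c *: x) = conjc c *: s x.
Proof. by case: invV. Qed.

Lemma os_norm_mxstar n (x : 'M[V]_n) : NV (mxstar s x) = NV x.
Proof. by case: invV. Qed.

Lemma star0 : s 0 = 0.
Proof. by apply: (@addrI _ (s 0)); rewrite -starD !addr0. Qed.

Lemma starN x : s (- x) = - s x.
Proof. by apply/eqP; rewrite -subr_eq0 opprK -starD addNr star0. Qed.

Lemma mxstarD n (x y : 'M[V]_n) : mxstar s (x + y) = mxstar s x + mxstar s y.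
Proof. by apply/matrixP => i j; rewrite !mxE starD. Qed.

Lemma mxstarN n (x : 'M[V]_n) : mxstar s (- x) = - mxstar s x.
Proof. by apply/matrixP => i j; rewrite !mxE starN. Qed.

Lemma mxstarK n (x : 'M[V]_n) : mxstar s (mxstar s x) = x.
Proof. by apply/matrixP => i j; rewrite !mxE starK. Qed.

Hypothesis osV : is_operator_space NV.

Lemma nclosure_selfadjoint n (S : set 'M[V]_n) :
  (forall x, S x -> mxstar s x = x) ->
  forall x, nclosure (@NV n) S x -> mxstar s x = x.
Proof.
move=> S_sa x clx; apply/eqP; rewrite -subr_eq0; apply/eqP/(os_norm_eq0 osV).
apply/eqP; rewrite eq_le os_norm_ge0 // andbT.
apply/ler_addgt0Pr => e e0; rewrite add0r.
have e2 : 0 < e / 2 by rewrite divr_gt0.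
have [p Sp xp_small] := clx _ e2.
have -> : mxstar s x - x = mxstar s (x - p) - (x - p).
  by rewrite mxstarD mxstarN (S_sa p Sp) opprB addrA subrK.
apply: le_trans (os_normD osV _ _) _.
rewrite (os_normN osV) os_norm_mxstar.
have : e / 2 + e / 2 = e by rewrite -splitr.
lra.
Qed.

End Involution.

Section QuotientSeminorm.
Variables (R : realType) (V : lmodType R[i]).
Local Notation C := R[i].
Variable NV : forall n, 'M[V]_n -> R.
Hypothesis osV : is_operator_space NV.
Variable J : set V.
Hypothesis J0 : J 0.
Hypothesis JD : forall x y, J x -> J y -> J (x + y).
Hypothesis JZ : forall c x, J x -> J (c *: x).

Lemma J_sum I (r : seq I) (P : pred I) (F : I -> V) :
  (forall i, P i -> J (F i)) -> J (\sum_(i <- r | P i) F i).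
Proof. by move=> JF; apply: big_ind. Qed.

Lemma mxinP n (x : 'M[V]_n) : mxin J n x <-> forall i j, J (x i j).
Proof. by []. Qed.

Lemma mxin0 n : mxin J n 0.
Proof. by apply/mxinP => i j; rewrite mxE. Qed.

Lemma mxinD n (x y : 'M[V]_n) : mxin J n x -> mxin J n y -> mxin J n (x + y).
Proof.
by move=> Jx Jy; apply/mxinP => i j; rewrite mxE; exact: JD (Jx i j) (Jy i j).
Qed.

Lemma mxinZ n c (x : 'M[V]_n) : mxin J n x -> mxin J n (map_mx ( *:%R c) x).
Proof. by move=> Jx; apply/mxinP => i j; rewrite mxE; exact: JZ (Jx i j). Qed.

Lemma mxin_compress m n (a : 'M[C]_(m, n)) (b : 'M[C]_(n, m)) (x : 'M[V]_n) :
  mxin J n x -> mxin J m (rsmul (lsmul a x) b).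
Proof.
move=> Jx; apply/mxinP => i j; rewrite mxE; apply: J_sum => k _; apply: JZ.
by rewrite mxE; apply: J_sum => l _; exact: JZ (Jx _ _).
Qed.

Lemma mxin_ulsubmx n m (x : 'M[V]_(n + m)) : mxin J _ x -> mxin J n (ulsubmx x).
Proof. by move=> Jx; apply/mxinP => i j; rewrite !mxE; exact: Jx. Qed.

Lemma mxin_drsubmx n m (x : 'M[V]_(n + m)) : mxin J _ x -> mxin J m (drsubmx x).
Proof. by move=> Jx; apply/mxinP => i j; rewrite !mxE; exact: Jx. Qed.

Lemma mxin_dsum n m (x : 'M[V]_n) (y : 'M[V]_m) :
  mxin J n x -> mxin J m y -> mxin J _ (dsum x y).
Proof.
move=> Jx Jy; apply/mxinP => i j; rewrite -(@splitK _ _ i) -(@splitK _ _ j).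
by case: (fintype.split i) => k; case: (fintype.split j) => l;
  rewrite /dsum /= ?block_mxEul ?block_mxEur ?block_mxEdl ?block_mxEdr ?mxE;
  first [exact: Jx | exact: Jy | exact: J0].
Qed.

Definition qnorm n (x : 'M[V]_n) : R := inf [set NV (x + j) | j in mxin J n].

Lemma qnorm_set_neq0 n (x : 'M[V]_n) : [set NV (x + j) | j in mxin J n] !=set0.
Proof. by exists (NV (x + 0)), 0 => //; exact: mxin0. Qed.

Lemma qnorm_set_lbound n (x : 'M[V]_n) : has_lbound [set NV (x + j) | j in mxin J n].
Proof. by exists 0 => _ [j _ <-]; exact: os_norm_ge0. Qed.

Lemma qnorm_le n (x j : 'M[V]_n) : mxin J n j -> qnorm x <= NV (x + j).
Proof. by move=> Jj; apply: (ge_inf (qnorm_set_lbound x)); exists j. Qed.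

Lemma qnorm_ge0 n (x : 'M[V]_n) : 0 <= qnorm x.
Proof.
apply: lb_le_inf; first exact: qnorm_set_neq0.
by move=> _ [j _ <-]; exact: os_norm_ge0.
Qed.

Lemma qnorm_approx n (x : 'M[V]_n) e :
  0 < e -> exists2 j, mxin J n j & NV (x + j) < qnorm x + e.
Proof.
move=> e0; have := @inf_lt _ _ (qnorm x + e) (qnorm_set_neq0 x).
by rewrite ltrDl e0 => /(_ isT) [_ [j Jj <-] lt_e]; exists j.
Qed.

Lemma qnorm_le_scaled n m (x : 'M[V]_n) (y : 'M[V]_m) c : 0 <= c ->
  (forall k, mxin J n k ->
     exists2 k', mxin J m k' & NV (y + k') <= c * NV (x + k)) ->
  qnorm y <= c * qnorm x.
Proof.
move=> c0 y_dom; apply/ler_addgt0Pr => e e0.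
have ec : 0 < e / (c + 1) by rewrite divr_gt0 //; lra.
have [k Jk xk_near] := qnorm_approx x ec.
have [k' Jk' yk'_le] := y_dom k Jk.
apply: le_trans (qnorm_le y Jk') _; apply: le_trans yk'_le _.
have ecE : e / (c + 1) * (c + 1) = e by rewrite divfK // gt_eqF //; lra.
move: xk_near ec ecE; move: (e / (c + 1)) (NV (x + k)) (qnorm x) => t a b; nra.
Qed.

Lemma qnormD n (x y : 'M[V]_n) : qnorm (x + y) <= qnorm x + qnorm y.
Proof.
apply/ler_addgt0Pr => e e0.
have e2 : 0 < e / 2 by rewrite divr_gt0.
have [j Jj xj_near] := qnorm_approx x e2.
have [k Jk yk_near] := qnorm_approx y e2.
apply: le_trans (qnorm_le (x + y) (mxinD Jj Jk)) _.
rewrite addrACA; apply: le_trans (os_normD osV _ _) _.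
have : e / 2 + e / 2 = e by rewrite -splitr.
lra.
Qed.

Lemma qnormZ_le n c (x : 'M[V]_n) :
  qnorm (map_mx ( *:%R c) x) <= cabs c * qnorm x.
Proof.
apply: qnorm_le_scaled; first exact: cabs_ge0.
move=> k Jk; exists (map_mx ( *:%R c) k); first exact: mxinZ.
have -> : map_mx ( *:%R c) x + map_mx ( *:%R c) k = map_mx ( *:%R c) (x + k).
  by apply/matrixP => i j; rewrite !mxE scalerDr.
by rewrite (os_normZ osV).
Qed.

Lemma qnormZ n c (x : 'M[V]_n) : qnorm (map_mx ( *:%R c) x) = cabs c * qnorm x.
Proof.
apply/eqP; rewrite eq_le qnormZ_le /=.
have [->|c0] := eqVneq c 0; first by rewrite cabs0 mul0r qnorm_ge0.
have := qnormZ_le c^-1 (map_mx ( *:%R c) x).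
have -> : map_mx ( *:%R c^-1) (map_mx ( *:%R c) x) = x.
  by apply/matrixP => i j; rewrite !mxE scalerA mulVf // scale1r.
have cpos := cabs_gt0 c0.
by rewrite cabsV -(ler_pM2l cpos) mulrA mulfV ?gt_eqF // mul1r.
Qed.

Lemma qnorm_compress n (a b : 'M[C]_n) (x : 'M[V]_n) ca cb :
  opbound a ca -> opbound b cb -> qnorm (rsmul (lsmul a x) b) <= ca * qnorm x * cb.
Proof.
move=> a_ca b_cb; have [ca0 _] := a_ca; have [cb0 _] := b_cb.
rewrite mulrAC; apply: qnorm_le_scaled; first exact: mulr_ge0.
move=> k Jk; exists (rsmul (lsmul a k) b); first exact: mxin_compress.
rewrite -rsmulDl -lsmulDr mulrAC; exact: os_norm_compress.
Qed.

Lemma qnorm_dsum n m (x : 'M[V]_n) (y : 'M[V]_m) :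
  qnorm (dsum x y) = Num.max (qnorm x) (qnorm y).
Proof.
apply/eqP; rewrite eq_le; apply/andP; split.
  apply/ler_addgt0Pr => e e0.
  have [j Jj xj_near] := qnorm_approx x e0.
  have [k Jk yk_near] := qnorm_approx y e0.
  apply: le_trans (qnorm_le (dsum x y) (mxin_dsum Jj Jk)) _.
  have -> : dsum x y + dsum j k = dsum (x + j) (y + k).
    by rewrite /dsum add_block_mx !addr0.
  rewrite (os_norm_dsum osV) ge_max; apply/andP; split.
    by apply: le_trans (ltW xj_near) _; rewrite lerD2r le_max lexx.
  by apply: le_trans (ltW yk_near) _; rewrite lerD2r le_max lexx orbT.
apply: lb_le_inf; first exact: qnorm_set_neq0.
move=> _ [j Jj <-]; rewrite ge_max; apply/andP; split.
  apply: le_trans (os_norm_ulsubmx osV (dsum x y + j)).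
  have -> : ulsubmx (dsum x y + j) = x + ulsubmx j.
    by rewrite -{1}[j]submxK /dsum add_block_mx block_mxKul.
  exact: qnorm_le (mxin_ulsubmx Jj).
apply: le_trans (os_norm_drsubmx osV (dsum x y + j)).
have -> : drsubmx (dsum x y + j) = y + drsubmx j.
  by rewrite -{1}[j]submxK /dsum add_block_mx block_mxKdr.
exact: qnorm_le (mxin_drsubmx Jj).
Qed.

Variable s : V -> V.
Hypothesis invV : is_cci_involution NV s.
Hypothesis J_star : forall x, J x -> J (s x).

Lemma qnorm_mxstar n (x : 'M[V]_n) : qnorm (mxstar s x) = qnorm x.
Proof.
have qnorm_mxstar_le (z : 'M[V]_n) : qnorm (mxstar s z) <= qnorm z.
  rewrite -[qnorm z]mul1r; apply: qnorm_le_scaled => // k Jk.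
  exists (mxstar s k).
    by apply/mxinP => i j; rewrite mxE; exact: J_star (Jk _ _).
  by rewrite -(mxstarD invV) (os_norm_mxstar invV) mul1r.
apply/eqP; rewrite eq_le qnorm_mxstar_le /=.
by rewrite -{1}(mxstarK invV x) qnorm_mxstar_le.
Qed.

End QuotientSeminorm.

Lemma map_mx_surj (A B : Type) (f : A -> B) m n :
  (forall b, exists a, f a = b) ->
  forall y : 'M[B]_(m, n), exists x, map_mx f x = y.
Proof.
move=> f_surj y; exists (\matrix_(i, j) projT1 (cid (f_surj (y i j)))).
by apply/matrixP => i j; rewrite !mxE; exact: projT2 (cid (f_surj (y i j))).
Qed.

Section LinearImage.
Variables (R : realType) (X Y : lmodType R[i]) (phi : {linear X -> Y}).

Definition in_image : pred Y := fun y => `[< exists x, phi x = y >].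

Record lin_image := LinImage { image_val : Y; image_valP : image_val \in in_image }.
HB.instance Definition _ := [isSub for image_val].
HB.instance Definition _ := [Choice of lin_image by <:].

Lemma in_image_subsemimod_closed : GRing.subsemimod_closed in_image.
Proof.
split; first split.
- by apply/asboolP; exists 0; rewrite linear0.
- move=> _ _ /asboolP[x <-] /asboolP[y <-].
  by apply/asboolP; exists (x + y); rewrite linearD.
- by move=> a _ /asboolP[x <-]; apply/asboolP; exists (a *: x); rewrite linearZ.
Qed.
HB.instance Definition _ :=
  GRing.SubChoice_isSubLmodule.Build _ _ _ lin_image in_image_subsemimod_closed.

Lemma mem_in_image x : phi x \in in_image.
Proof. by apply/asboolP; exists x. Qed.

Definition to_image (x : X) : lin_image := LinImage (mem_in_image x).

Lemma to_image_is_linear : linear to_image.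
Proof. by move=> a u v; apply: val_inj; rewrite /= linearP. Qed.
HB.instance Definition _ :=
  GRing.isLinear.Build _ _ _ _ to_image to_image_is_linear.

Lemma to_image_surj (y : lin_image) : exists x, to_image x = y.
Proof. by case: y => y /[dup] /asboolP [x phix] yP; exists x; apply: val_inj. Qed.

Definition lin_kernel : set X := [set x | phi x = 0].

Lemma lin_kernel0 : lin_kernel 0.
Proof. exact: linear0. Qed.

Lemma lin_kernelD x y : lin_kernel x -> lin_kernel y -> lin_kernel (x + y).
Proof. by rewrite /lin_kernel /= linearD => -> ->; rewrite addr0. Qed.

Lemma lin_kernelZ c x : lin_kernel x -> lin_kernel (c *: x).
Proof. by rewrite /lin_kernel /= linearZ => ->; exact: scaler0. Qed.

Lemma to_image_eq0 x : to_image x = 0 <-> lin_kernel x.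
Proof. by split => [/(congr1 val) //|phix0]; apply: val_inj. Qed.

Lemma map_to_image_surj m n (y : 'M[lin_image]_(m, n)) :
  exists x, map_mx to_image x = y.
Proof. exact: map_mx_surj to_image_surj y. Qed.

End LinearImage.

Section Quotient.
Variable R : realType.
Local Notation C := R[i].
Variables (X : lmodType C) (N : forall n, 'M[X]_n -> R) (star : X -> X)
  (P : forall n, set 'M[X]_n).
Hypothesis moosX : is_moos N star P.
Variables (Y : lmodType C) (NY : forall n, 'M[Y]_n -> R) (starY : Y -> Y)
  (PY : forall n, set 'M[Y]_n) (phi : {linear X -> Y}).
Hypothesis moosY : is_moos NY starY PY.
Hypothesis phi_star : forall x, phi (star x) = starY (phi x).
Hypothesis phi_cc : forall n (x : 'M[X]_n), NY (map_mx phi x) <= N x.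
Hypothesis phi_cp : forall n (x : 'M[X]_n), P x -> PY (map_mx phi x).

Let osX : is_operator_space N. Proof. by case: moosX. Qed.
Let invX : is_cci_involution N star. Proof. by case: moosX. Qed.
Let ordX : is_matrix_ordering N star P. Proof. by case: moosX. Qed.
Let osY : is_operator_space NY. Proof. by case: moosY. Qed.
Let invY : is_cci_involution NY starY. Proof. by case: moosY. Qed.
Let ordY : is_matrix_ordering NY starY PY. Proof. by case: moosY. Qed.

Local Notation J := (lin_kernel phi).
Let J0 : J 0 := lin_kernel0 phi.
Let JD : forall x y, J x -> J y -> J (x + y) := @lin_kernelD _ _ _ phi.
Let JZ : forall c x, J x -> J (c *: x) := @lin_kernelZ _ _ _ phi.
Local Notation qn := (qnorm N J).
Local Notation Q := (lin_image phi).
Local Notation q := (to_image phi).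

Lemma lin_kernel_star x : J x -> J (star x).
Proof. by rewrite /lin_kernel /= phi_star => ->; exact: star0 invY. Qed.

Lemma mxin_lin_kernel n (x : 'M[X]_n) : mxin J n x <-> map_mx phi x = 0.
Proof.
split => [Jx | /matrixP phix0].
  by apply/matrixP => i j; rewrite !mxE; exact: Jx.
by apply/mxinP => i j; have := phix0 i j; rewrite !mxE.
Qed.

Lemma os_norm_map_le_qnorm n (x : 'M[X]_n) : NY (map_mx phi x) <= qn x.
Proof.
apply: lb_le_inf; first exact: (qnorm_set_neq0 N J0 x).
move=> _ [j /mxin_lin_kernel phij0 <-]; apply: le_trans (phi_cc _).
by rewrite map_mxD phij0 addr0.
Qed.

Lemma qnorm_eq0 n (x : 'M[X]_n) : qn x = 0 -> mxin J n x.
Proof.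
move=> qx0; apply/mxin_lin_kernel/(os_norm_eq0 osY)/eqP.
by rewrite eq_le os_norm_ge0 // andbT -qx0 os_norm_map_le_qnorm.
Qed.

Lemma map_to_image_eq0 n (x : 'M[X]_n) : map_mx q x = 0 <-> mxin J n x.
Proof.
split => [/matrixP qx0 | Jx].
  by apply/mxinP => i j; apply/to_image_eq0; have := qx0 i j; rewrite !mxE.
by apply/matrixP => i j; rewrite !mxE; apply/to_image_eq0; exact: Jx.
Qed.

Definition quot_norm n (y : 'M[Q]_n) : R :=
  inf [set N x | x in [set x | map_mx q x = y]].

Lemma quot_norm_map n (x : 'M[X]_n) : quot_norm (map_mx q x) = qn x.
Proof.
rewrite /quot_norm /qnorm; congr inf; apply/seteqP; split.
  move=> _ [x' qx' <-]; exists (x' - x); last by rewrite addrC subrK.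
  by apply/map_to_image_eq0; rewrite map_mxB qx' subrr.
move=> _ [j Jj <-]; exists (x + j) => //.
by rewrite /= map_mxD (proj2 (map_to_image_eq0 j) Jj) addr0.
Qed.

Lemma in_image_star y : y \in in_image phi -> starY y \in in_image phi.
Proof. by move=> /asboolP [x <-]; apply/asboolP; exists (star x). Qed.

Definition quot_star (y : Q) : Q := LinImage (in_image_star (image_valP y)).

Lemma quot_star_map x : quot_star (q x) = q (star x).
Proof. by apply: val_inj => /=; rewrite phi_star. Qed.

Lemma mxstar_quot_map n (x : 'M[X]_n) :
  mxstar quot_star (map_mx q x) = map_mx q (mxstar star x).
Proof. by apply/matrixP => i j; rewrite !mxE quot_star_map. Qed.

Definition quot_cone n : set 'M[Q]_n :=
  nclosure (@quot_norm n) [set map_mx q x | x in @P n].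

Lemma quot_os : is_operator_space quot_norm.
Proof.
split.
- move=> n y1 y2.
  have [x1 <-] := map_to_image_surj y1; have [x2 <-] := map_to_image_surj y2.
  rewrite -map_mxD !quot_norm_map; exact: (qnormD osX J0 JD).
- move=> n c y; have [x <-] := map_to_image_surj y.
  by rewrite -map_scale !quot_norm_map (qnormZ osX J0 JZ).
- move=> n y; have [x <-] := map_to_image_surj y.
  by rewrite quot_norm_map => /qnorm_eq0 /map_to_image_eq0.
- move=> n m y1 y2.
  have [x1 <-] := map_to_image_surj y1; have [x2 <-] := map_to_image_surj y2.
  by rewrite -map_dsum !quot_norm_map (qnorm_dsum osX J0).
- move=> n a b y ca cb a_ca b_cb; have [x <-] := map_to_image_surj y.
  rewrite -map_lsmul -map_rsmul !quot_norm_map.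
  exact: (qnorm_compress osX J0 JD JZ _ a_ca b_cb).
Qed.

Lemma quot_involution : is_cci_involution quot_norm quot_star.
Proof.
split.
- move=> y; have [x <-] := to_image_surj y.
  by rewrite !quot_star_map (starK invX).
- move=> y1 y2; have [x1 <-] := to_image_surj y1; have [x2 <-] := to_image_surj y2.
  by rewrite -linearD !quot_star_map (starD invX) linearD.
- move=> c y; have [x <-] := to_image_surj y.
  by rewrite -linearZ !quot_star_map (starZ invX) linearZ.
- move=> n y; have [x <-] := map_to_image_surj y.
  rewrite mxstar_quot_map !quot_norm_map.
  exact: (qnorm_mxstar osX J0 invX lin_kernel_star).
Qed.

Lemma map_val_to_image n (x : 'M[X]_n) :
  map_mx val (map_mx q x) = map_mx phi x.
Proof. by apply/matrixP => i j; rewrite !mxE. Qed.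

Lemma os_norm_val_le_quot n (y : 'M[Q]_n) :
  NY (map_mx val y) <= quot_norm y.
Proof.
have [x <-] := map_to_image_surj y.
by rewrite map_val_to_image quot_norm_map os_norm_map_le_qnorm.
Qed.

Lemma quot_cone_val n (y : 'M[Q]_n) : quot_cone y -> PY (map_mx val y).
Proof.
have [_ PY_closed _ _ _] := ordY; move=> cone_y; apply: PY_closed.
apply: (nclosure_lipschitz (K := 1) ler01) (ex_intro2 _ _ y cone_y erefl).
  by move=> y1 y2; rewrite mul1r -map_mxB; exact: os_norm_val_le_quot.
by move=> _ [_ [x Px <-] <-]; rewrite map_val_to_image; exact: phi_cp.
Qed.

Lemma quot_ordering : is_matrix_ordering quot_norm quot_star quot_cone.
Proof.
have [P_sa _ P_compress P_dsum _] := ordX.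
split.
- move=> n; apply: (nclosure_selfadjoint quot_involution quot_os).
  move=> _ [x Px <-].
  by rewrite mxstar_quot_map P_sa.
- by move=> n; exact: (nclosure_idem quot_os).
- move=> n m a y cone_y.
  have [K K0 compress_le] := os_norm_compress_rect quot_os (adjmx a) a.
  apply: (nclosure_lipschitz (f := fun y => rsmul (lsmul (adjmx a) y) a) K0 _ _
    (ex_intro2 _ _ y cone_y erefl)).
    by move=> y1 y2; rewrite -compressB; exact: compress_le.
  move=> _ [_ [x Px <-] <-]; exists (rsmul (lsmul (adjmx a) x) a).
    exact: P_compress.
  by rewrite map_rsmul map_lsmul.
- move=> n m; apply: (nclosure_dsum quot_os) => _ _ [x1 Px1 <-] [x2 Px2 <-].
  by exists (dsum x1 x2); [exact: P_dsum | rewrite map_dsum].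
- move=> n y cone_y cone_Ny; have [_ _ _ _ PY_proper] := ordY.
  have val_y0 : map_mx val y = 0.
    apply: PY_proper; first exact: quot_cone_val.
    by rewrite -map_mxN; exact: quot_cone_val.
  apply/matrixP => i j; apply: val_inj; move/matrixP/(_ i j): val_y0.
  by rewrite !mxE.
Qed.

Lemma quot_moos : is_moos quot_norm quot_star quot_cone.
Proof.
by split; [exact: quot_os | exact: quot_involution | exact: quot_ordering].
Qed.

End Quotient.

Theorem proposition3p4 (R : realType) (X : lmodType R[i])
    (N : forall n, 'M[X]_n -> R) (star : X -> X) (P : forall n, set 'M[X]_n)
    (J : set X) :
  is_moos N star P -> is_kernel N star P J ->
  exists (Q : lmodType R[i]) (q : {linear X -> Q})
         (NQ : forall n, 'M[Q]_n -> R) (starQ : Q -> Q) (PQ : forall n, set 'M[Q]_n),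
    [/\ (forall y : Q, exists x : X, q x = y) /\
        (forall x : X, q x = 0 <-> J x),
        (forall n (x : 'M[X]_n),
            NQ n (map_mx q x) = inf [set N n (x + j) | j in mxin J n]),
        (forall x : X, starQ (q x) = q (star x)),
        (forall n, PQ n = nclosure (NQ n) [set map_mx q x | x in P n]) &
        is_moos NQ starQ PQ].
Proof.
move=> moosX [Y [NY [starY [PY [phi [moosY phi_star phi_cc phi_cp ->]]]]]].
exists (lin_image phi), (to_image phi), (@quot_norm _ _ N _ phi),
  (quot_star phi_star), (@quot_cone _ _ N P _ phi).
split=> //.
- by split; [exact: to_image_surj | exact: to_image_eq0].
- exact: quot_norm_map.
- exact: quot_star_map.
- exact: (quot_moos moosX moosY phi_star phi_cc phi_cp).
Qed.
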